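(* The set of properties $\{AL, BR, ER, \{1\}\}$ is query-complete, where $AL$ is the set of alternating permutations, $BR$ is the set of permutations $\pi$ with $\pi(1)<\pi(2)$, $ER$ is the set of permutations $\pi$ of length $n$ with $\pi(n-1)<\pi(n)$, and $\{1\}$ is the set containing only the permutation of length 1.
   Context: A permutation $\pi$ of length $n$ is alternating if for every $i\in[2,n-1]$, $\pi(i)$ does not lie between $\pi(i-1)$ and $\pi(i+1)$. An interval of a permutation is a set of contiguous positions whose values form a contiguous set; a permutation of length $n$ is simple if its only intervals have sizes $0,1,n$. Given a permutation $\sigma$ of length $m$ and nonempty permutations $\alpha_1,\dots,\alpha_m$, the inflation $\sigma[\alpha_1,\dots,\alpha_m]$ is the permutation obtained by replacing each entry $\sigma(i)$ by an interval order isomorphic to $\alpha_i$, these intervals being in the relative order given by $\sigma$ (e.g. $2413[1,132,321,12]=479832156$). A property is any set of permutations; $\pi$ satisfies property $P$ if $\pi\in P$. A set $\mathcal{P}$ of properties is query-complete if, for every simple permutation $\sigma$ (of length $m$) and every $P\in\mathcal{P}$, whether $\sigma[\alpha_1,\dots,\alpha_m]$ satisfies $P$ is determined by $\sigma$ together with knowledge of which properties of $\mathcal{P}$ each $\alpha_i$ satisfies. *)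

From mathcomp Require Import all_boot.
Set Implicit Arguments. Unset Strict Implicit. Unset Printing Implicit Defensive.

(* A permutation of length n is represented in one-line notation as a
   sequence of naturals which is a rearrangement of 0,1,...,n-1
   (values shifted down by one with respect to the paper). *)
Definition is_perm (s : seq nat) : bool := perm_eq s (iota 0 (size s)).

Definition property := seq nat -> bool.
Definition no_prop : property := fun _ => false.

Definition min_seq (t : seq nat) : nat := foldr minn (head 0 t) t.
Definition max_seq (t : seq nat) : nat := foldr maxn 0 t.

Definition is_interval (s : seq nat) (i k : nat) : bool :=
  (i + k <= size s) &&
  (max_seq (take k (drop i s)) - min_seq (take k (drop i s)) == k.-1).

Definition simple (s : seq nat) : bool :=
  is_perm s &&
  all (fun i => all (fun k => is_interval s i k ==> ((k <= 1) || (k == size s)))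
                    (iota 0 (size s).+1))
      (iota 0 (size s).+1).

(* Inflation sigma[alpha_1,...,alpha_m]: the i-th block is alpha_i shifted by
   the total length of the alpha_j with sigma(j) < sigma(i). *)
Definition offset (sigma : seq nat) (alphas : seq (seq nat)) (i : nat) : nat :=
  \sum_(j <- iota 0 (size sigma) | nth 0 sigma j < nth 0 sigma i) size (nth [::] alphas j).

Definition inflation (sigma : seq nat) (alphas : seq (seq nat)) : seq nat :=
  flatten [seq map (addn (offset sigma alphas i)) (nth [::] alphas i)
          | i <- iota 0 (size sigma)].

Definition between (a b c : nat) : bool := ((a < b) && (b < c)) || ((c < b) && (b < a)).

Definition AL : property := fun s =>
  all (fun i => (0 < i) && (i.+1 < size s) ==>
     ~~ between (nth 0 s i.-1) (nth 0 s i) (nth 0 s i.+1)) (iota 0 (size s)).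

Definition BR : property := fun s =>
  (1 < size s) && (nth 0 s 0 < nth 0 s 1).

Definition ER : property := fun s =>
  (1 < size s) && (nth 0 s (size s).-2 < nth 0 s (size s).-1).

Definition ONE : property := fun s => s == [:: 0].

(* Query-completeness of a set Ps of properties: for every simple sigma of
   length m and every P in Ps, membership of sigma[alpha_1..alpha_m] in P is
   determined by sigma and by which properties of Ps each alpha_i satisfies. *)
Definition query_complete (Ps : seq property) : Prop :=
  forall (sigma : seq nat) (alphas betas : seq (seq nat)),
    simple sigma ->
    size alphas = size sigma -> size betas = size sigma ->
    (forall i, i < size sigma ->
       [/\ is_perm (nth [::] alphas i), 0 < size (nth [::] alphas i),
           is_perm (nth [::] betas i), 0 < size (nth [::] betas i) &
           forall q, q < size Ps ->
             nth no_prop Ps q (nth [::] alphas i) = nth no_prop Ps q (nth [::] betas i)]) ->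
    forall p, p < size Ps ->
      nth no_prop Ps p (inflation sigma alphas) = nth no_prop Ps p (inflation sigma betas).

From mathcomp Require Import all_boot.
Set Implicit Arguments. Unset Strict Implicit. Unset Printing Implicit Defensive.

(* Record the shape of a sequence by its word of steps: for each pair of
   adjacent entries, whether it is an ascent and whether it is a descent.
   AL, BR and ER only depend on the step word (AL says that no two
   consecutive steps go the same way, BR and ER read the first and last
   step), and in fact on its profile: emptiness, first step, last step and
   the alternation bit.  The profile of a concatenation w1 ++ c :: w2 is a
   function of the profiles of w1, w2 and the middle step c, so the profile
   of a flattened list of nonempty blocks is determined by the profiles of
   the blocks and the steps at the junctions between consecutive blocks.
   For an inflation sigma[alpha_1, ..., alpha_m] the blocks are shifted
   copies of the alpha_i (same steps), and the junction steps are the steps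
   of sigma, because whole blocks compare as the entries of sigma do.  For
   a nonempty permutation the four properties determine its profile, which
   gives AL, BR and ER; the property {1} is handled directly. *)

Definition step (x y : nat) : bool * bool := (x < y, y < x).

Definition steps (s : seq nat) : seq (bool * bool) :=
  if s is x :: t then pairmap step x t else [::].

(* Default step read off an empty step word; it is not an ascent, so that
   BR and ER fail on sequences of length at most one. *)
Definition no_step : bool * bool := (false, true).

Definition compatible (c c' : bool * bool) : bool :=
  ~~ ((c.1 && c'.1) || (c.2 && c'.2)).

Lemma steps_cat s t : s != [::] -> t != [::] ->
  steps (s ++ t) = steps s ++ step (last 0 s) (head 0 t) :: steps t.
Proof. by case: s => [|x s] // _; case: t => [|y t] // _; rewrite /= pairmap_cat. Qed.

Lemma steps_shift c s : steps (map (addn c) s) = steps s.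
Proof.
case: s => [|x s] //=; elim: s x => [|y s IH] x //=.
by rewrite IH /step !ltn_add2l.
Qed.

Lemma AL_cons x s :
  AL (x :: s) = ((1 < size s) ==> ~~ between x (nth 0 s 0) (nth 0 s 1)) && AL s.
Proof.
have iota1 n : iota 1 n = map S (iota 0 n) by rewrite -[1]addn0 iotaDl.
rewrite /AL /= iota1 all_map; case: s => [|y s] //=.
by rewrite iota1 !all_map /= !ltnS.
Qed.

Lemma AL_steps s : AL s = sorted compatible (steps s).
Proof.
elim: s => [|x [|y [|z t]] IH] //.
rewrite AL_cons IH /= /compatible /between /=.
by rewrite [(y < x) && _]andbC.
Qed.

Lemma BR_steps s : BR s = (head no_step (steps s)).1.
Proof. by case: s => [|x [|y t]]. Qed.

Lemma ER_steps s : ER s = (last no_step (steps s)).1.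
Proof. by elim: s => [|x [|y [|z t]] IH]. Qed.

(* The part of a step word that AL, BR and ER (and concatenation) see. *)
Record profile := Profile
  { p_empty : bool; p_first : bool * bool; p_last : bool * bool; p_alt : bool }.

Definition profile_of (w : seq (bool * bool)) : profile :=
  Profile (w == [::]) (head no_step w) (last no_step w) (sorted compatible w).

Definition glue (a : profile) (c : bool * bool) (b : profile) : profile :=
  Profile false (if p_empty a then c else p_first a)
    (if p_empty b then c else p_last b)
    ((p_empty a || p_alt a && compatible (p_last a) c) &&
     (p_empty b || compatible c (p_first b) && p_alt b)).

Lemma profile_cat w1 c w2 :
  profile_of (w1 ++ c :: w2) = glue (profile_of w1) c (profile_of w2).
Proof.
case: w1 => [|x w1]; case: w2 => [|y w2];
  by rewrite /profile_of /glue /= ?last_cat /= ?cat_path /= ?andbT ?andbA.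
Qed.

Definition strict (c : bool * bool) : bool := c.2 == ~~ c.1.

Lemma strict_eq c c' : strict c -> strict c' -> c.1 = c'.1 -> c = c'.
Proof. by case: c c' => [a b] [a' b'] /eqP /= -> /eqP /= -> ->. Qed.

Lemma steps_strict s : uniq s -> all strict (steps s).
Proof.
case: s => [|x s] //=; elim: s x => [|y s IH] x //= /andP[xNs ys].
rewrite IH // andbT /strict /step /=.
have : x != y by apply: contraNneq xNs => ->; rewrite mem_head.
by case: ltngtP.
Qed.

Lemma strict_ends w : all strict w ->
  strict (head no_step w) /\ strict (last no_step w).
Proof.
case: w => [|c w] // /allP cw_strict.
by split; apply: cw_strict; rewrite /= ?mem_head ?mem_last.
Qed.

Lemma ONE_size s : is_perm s -> 0 < size s -> ONE s = (size s <= 1).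
Proof.
rewrite /ONE /is_perm; case: s => [|x [|y t]] // s_perm _.
  by have := perm_mem s_perm x; rewrite mem_head mem_iota; case: x {s_perm}.
by apply/negbTE/eqP.
Qed.

Lemma profile_of_props s t :
  is_perm s -> 0 < size s -> is_perm t -> 0 < size t ->
  AL s = AL t -> BR s = BR t -> ER s = ER t -> ONE s = ONE t ->
  profile_of (steps s) = profile_of (steps t).
Proof.
move=> s_perm s_pos t_perm t_pos eq_AL eq_BR eq_ER eq_ONE.
have uniq_perm u : is_perm u -> uniq u by move/perm_uniq->; exact: iota_uniq.
have [s_head s_last] := strict_ends (steps_strict (uniq_perm s s_perm)).
have [t_head t_last] := strict_ends (steps_strict (uniq_perm t t_perm)).
have steps_nil u : (steps u == [::]) = (size u <= 1) by case: u => [|x [|y u]].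
rewrite /profile_of !steps_nil -!ONE_size // eq_ONE -!AL_steps eq_AL.
rewrite (strict_eq s_head t_head) -?BR_steps //.
by rewrite (strict_eq s_last t_last) -?ER_steps.
Qed.

Definition junction (b b' : seq nat) : bool * bool := step (last 0 b) (head 0 b').

Definition junctions (bs : seq (seq nat)) : seq (bool * bool) :=
  if bs is b :: bs' then pairmap junction b bs' else [::].

Lemma profile_flatten (bs cs : seq (seq nat)) :
  all (predC1 [::]) bs -> all (predC1 [::]) cs ->
  map (profile_of \o steps) bs = map (profile_of \o steps) cs ->
  junctions bs = junctions cs ->
  profile_of (steps (flatten bs)) = profile_of (steps (flatten cs)).
Proof.
(* Lists of blocks of different lengths have profile lists of different
   sizes, which disposes of the mismatched cases below. *)
elim: bs cs => [|b bs IH] [|c cs] //; try by move=> _ _ /(congr1 size).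
move=> /andP[b_ne bs_ne] /andP[c_ne cs_ne] eq_profiles.
have eq_b : profile_of (steps b) = profile_of (steps c).
  exact: (congr1 (head (profile_of [::])) eq_profiles).
have {eq_profiles} := congr1 behead eq_profiles.
case: bs cs IH bs_ne cs_ne => [|b' bs] [|c' cs] IH;
  try by rewrite /= ?cats0 // => _ _ /(congr1 size).
move=> bs_ne cs_ne eq_profiles eq_junctions.
have eq_junction : junction b b' = junction c c'.
  exact: (congr1 (head no_step) eq_junctions).
have [b'_ne _] := andP bs_ne; have [c'_ne _] := andP cs_ne.
have cat_nonempty (u us : seq nat) : u != [::] -> u ++ us != [::] by case: u.
have head_cat (u us : seq nat) : u != [::] -> head 0 (u ++ us) = head 0 u by case: u.
rewrite /= (steps_cat b_ne (cat_nonempty _ _ b'_ne)) (steps_cat c_ne (cat_nonempty _ _ c'_ne)).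
rewrite !head_cat // !profile_cat eq_b -/(junction b b') -/(junction c c') eq_junction.
rewrite -!/(flatten (_ :: _)) (IH (c' :: cs)) //.
exact: (congr1 behead eq_junctions).
Qed.

Lemma junctions_map_iota (f : nat -> seq nat) a n :
  junctions (map f (iota a n)) = map (fun i => junction (f i) (f i.+1)) (iota a n.-1).
Proof. by case: n => [|n] //=; elim: n a => [|n IH] a //=; rewrite IH. Qed.

Section Inflation.

Variables (sigma : seq nat) (alphas : seq (seq nat)).

Definition block (i : nat) : seq nat :=
  map (addn (offset sigma alphas i)) (nth [::] alphas i).

Lemma inflationE : inflation sigma alphas = flatten (map block (iota 0 (size sigma))).
Proof. by []. Qed.

Lemma offset_lt i j : i < size sigma -> nth 0 sigma i < nth 0 sigma j ->
  offset sigma alphas i + size (nth [::] alphas i) <= offset sigma alphas j.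
Proof.
rewrite /offset => i_lt lt_ij.
rewrite [X in _ <= X](bigID (fun k => nth 0 sigma k < nth 0 sigma i)) /= leq_add //.
  apply/eq_leq/esym/eq_bigl => k.
  by rewrite andb_idl // => lt_ki; apply: ltn_trans lt_ki lt_ij.
rewrite big_mkcond (bigD1_seq i) /= ?mem_iota ?iota_uniq //= lt_ij ltnn.
exact: leq_addr.
Qed.

Lemma inflation_single : size sigma = 1 -> inflation sigma alphas = nth [::] alphas 0.
Proof.
case: sigma => [|x [|y t]] //= _; rewrite /inflation /offset /= big_cons big_nil ltnn.
by rewrite cats0 map_id_in.
Qed.

Hypothesis alphas_perm : forall i, i < size sigma -> is_perm (nth [::] alphas i).
Hypothesis alphas_pos : forall i, i < size sigma -> 0 < size (nth [::] alphas i).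

Lemma block_nonempty i : i < size sigma -> block i != [::].
Proof. by move/alphas_pos; rewrite /block; case: (nth [::] alphas i). Qed.

Lemma block_lt i j x y : i < size sigma -> nth 0 sigma i < nth 0 sigma j ->
  x \in block i -> y \in block j -> x < y.
Proof.
move=> i_lt lt_ij /mapP[x' x'_in ->] /mapP[y' _ ->].
apply: leq_trans (leq_addr _ _); apply: leq_trans (offset_lt i_lt lt_ij).
by move: x'_in; rewrite ltn_add2l (perm_mem (alphas_perm i_lt)) mem_iota.
Qed.

Lemma ONE_inflation : size sigma != 1 -> ONE (inflation sigma alphas) = false.
Proof.
rewrite inflationE /ONE; case size_sigma: (size sigma) => [|[|m]] //= _.
have := block_nonempty (_ : 0 < size sigma); have := block_nonempty (_ : 1 < size sigma).
rewrite size_sigma => /(_ isT) + /(_ isT).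
case: (block 1) => [|y b1] // _; case: (block 0) => [|x b0] // _.
by apply/negbTE/eqP => /(congr1 size); rewrite /= size_cat /= addnS.
Qed.

Lemma junction_block i : uniq sigma -> i.+1 < size sigma ->
  junction (block i) (block i.+1) = step (nth 0 sigma i) (nth 0 sigma i.+1).
Proof.
move=> sigma_uniq i1_lt; have i_lt := ltnW i1_lt.
have last_in : last 0 (block i) \in block i.
  by case: (block i) (block_nonempty i_lt) => // x b _ /=; rewrite mem_last.
have head_in : head 0 (block i.+1) \in block i.+1.
  by case: (block i.+1) (block_nonempty i1_lt) => // x b _; rewrite mem_head.
rewrite /junction /step.
case: (ltngtP (nth 0 sigma i) (nth 0 sigma i.+1)) => [lt_sigma | gt_sigma | eq_sigma].
- have lt_blocks := block_lt i_lt lt_sigma last_in head_in.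
  by rewrite lt_blocks ltnNge ltnW.
- have gt_blocks := block_lt i1_lt gt_sigma head_in last_in.
  by rewrite gt_blocks ltnNge ltnW.
- by have := nth_uniq 0 i_lt i1_lt sigma_uniq; rewrite eq_sigma eqxx (ltn_eqF (ltnSn i)).
Qed.

Lemma junctions_inflation : uniq sigma ->
  junctions (map block (iota 0 (size sigma))) =
  map (fun i => step (nth 0 sigma i) (nth 0 sigma i.+1)) (iota 0 (size sigma).-1).
Proof.
move=> sigma_uniq; rewrite junctions_map_iota; apply/eq_in_map => i.
by rewrite mem_iota add0n => i_lt; apply: junction_block; rewrite // -ltn_predRL.
Qed.

End Inflation.

Lemma inflation_profile (sigma : seq nat) (alphas betas : seq (seq nat)) :
  uniq sigma ->
  (forall i, i < size sigma -> is_perm (nth [::] alphas i)) ->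
  (forall i, i < size sigma -> 0 < size (nth [::] alphas i)) ->
  (forall i, i < size sigma -> is_perm (nth [::] betas i)) ->
  (forall i, i < size sigma -> 0 < size (nth [::] betas i)) ->
  (forall i, i < size sigma ->
     profile_of (steps (nth [::] alphas i)) = profile_of (steps (nth [::] betas i))) ->
  profile_of (steps (inflation sigma alphas)) = profile_of (steps (inflation sigma betas)).
Proof.
move=> sigma_uniq alphas_perm alphas_pos betas_perm betas_pos eq_profiles.
have blocks_nonempty gammas : (forall i, i < size sigma -> 0 < size (nth [::] gammas i)) ->
    all (predC1 [::]) (map (block sigma gammas) (iota 0 (size sigma))).
  move=> gammas_pos; apply/allP => b /mapP[i]; rewrite mem_iota => /andP[_ i_lt] ->.
  exact: block_nonempty.
rewrite !inflationE; apply: profile_flatten; rewrite ?blocks_nonempty //.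
  rewrite -!map_comp; apply/eq_in_map => i; rewrite mem_iota => /andP[_ i_lt] /=.
  by rewrite !steps_shift eq_profiles.
by rewrite !junctions_inflation.
Qed.

Theorem mainTheorem4 : query_complete [:: AL; BR; ER; ONE].
Proof.
move=> sigma alphas betas /andP[sigma_perm _] _ _ blocks p p_lt.
have sigma_uniq : uniq sigma by rewrite (perm_uniq sigma_perm) iota_uniq.
have alphas_pos i : i < size sigma -> 0 < size (nth [::] alphas i) by case/blocks.
have betas_pos i : i < size sigma -> 0 < size (nth [::] betas i) by case/blocks.
have eq_profile : profile_of (steps (inflation sigma alphas)) =
                  profile_of (steps (inflation sigma betas)).
  apply: inflation_profile => // i /blocks[alpha_perm alpha_pos beta_perm beta_pos eq_props] //.
  apply: profile_of_props => //;
    [exact: (eq_props 0) | exact: (eq_props 1) | exact: (eq_props 2) | exact: (eq_props 3)].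
case: p p_lt => [|[|[|[|p]]]] //= _.
- rewrite !AL_steps; exact: (congr1 p_alt eq_profile).
- rewrite !BR_steps; exact: (congr1 (fun P => (p_first P).1) eq_profile).
- rewrite !ER_steps; exact: (congr1 (fun P => (p_last P).1) eq_profile).
have [size_sigma1 | size_sigma_ne1] := eqVneq (size sigma) 1.
  have := blocks 0; rewrite size_sigma1 => /(_ isT) [_ _ _ _ eq_props].
  by rewrite !inflation_single //; exact: (eq_props 3).
by rewrite !ONE_inflation.
Qed.
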